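(* Let $A$ be a commutative unital $\mathbb{K}$-algebra equipped with an involution $\dagger:A\to A$ (a linear map with $\dagger\circ\dagger=\mathrm{id}$ and $[a;b]^\dagger=[b^\dagger;a^\dagger]$). Let $q\in\{\theta,\mathrm r,\ell\}$ ($\theta\in\mathbb{K}$) and extend $\dagger$ to $T^+(A)$ by $(a_1\otimes\cdots\otimes a_n)^\dagger:=a_1^\dagger\otimes\cdots\otimes a_n^\dagger$. Then $(T^+(A),\bar\bullet^q,P_A,\dagger)$ is an involutive commutative $\mathbf R_q$-algebra, and together with $i_A:a\mapsto a\otimes1_{\mathbb{K}}$ it is the free involutive commutative $\mathbf R_q$-algebra over $(A,\dagger)$: for every unital commutative $\mathbf R_q$-algebra $(X,P)$ with involution $\dagger'$ commuting with $P$, and every unital algebra morphism $\phi:A\to X$ with $\phi(a^\dagger)=\phi(a)^{\dagger'}$, there is a unique $\mathbf R_q$-algebra morphism $\tilde\phi:T^+(A)\to X$ with $\tilde\phi\circ i_A=\phi$, and it satisfies $\tilde\phi(U^\dagger)=\tilde\phi(U)^{\dagger'}$ for all $U$.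
   Context: $\mathbb{K}$ is a field of characteristic $0$; $A$ has product $[a;b]$ and unit $1_A$. $T(A)=\bigoplus_{n\ge0}A^{\otimes n}$, $A^{\otimes0}=\mathbb{K}1_{\mathbb{K}}$, $a\otimes1_{\mathbb{K}}$ identified with $a$. For $q\in\{\theta,\mathrm r,\ell\}$ the product $\bullet^q$ on $T(A)$ is bilinear with $k1_{\mathbb{K}}\bullet^qU=kU=U\bullet^qk1_{\mathbb{K}}$ and for $a,b\in A$, $U,V\in T(A)$: $(a\otimes U)\bullet^q(b\otimes V)=a\otimes(U\bullet^q(b\otimes V))+b\otimes((a\otimes U)\bullet^qV)+M_q$, where $M_\theta=\theta[a;b]\otimes(U\bullet^\theta V)$ (quasi-shuffle of weight $\theta$), $M_{\mathrm r}=-1_A\otimes[a;b]\otimes(U\bullet^{\mathrm r}V)$ (right-shift shuffle), $M_\ell=-[a;b]\otimes1_A\otimes(U\bullet^\ell V)$ (left-shift shuffle). $T^+(A)=A\otimes T(A)$ with product $(a\otimes U)\bar\bullet^q(b\otimes V)=[a;b]\otimes(U\bullet^qV)$, unit $1_A\otimes1_{\mathbb{K}}$, and $P_A(a_1\otimes\cdots\otimes a_n)=1_A\otimes a_1\otimes\cdots\otimes a_n$. An $\mathbf R_\theta$-algebra is a Rota--Baxter algebra of scalar weight $\theta$: $(B,P)$ with $P(x)P(y)=P(P(x)y+xP(y))+\theta P(xy)$; an $\mathbf R_{\mathrm r}$-algebra is a Nijenhuis algebra: $P(x)P(y)=P(P(x)y+xP(y))-P^2(xy)$; an $\mathbf R_\ell$-algebra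 is a $TD$-algebra: $P(x)P(y)=P(P(x)y+xP(y))-P(xP(1_B)y)$. Morphisms of $\mathbf R_q$-algebras are unital algebra homomorphisms $f$ with $fP_1=P_2f$. An involutive commutative $\mathbf R_q$-algebra is a unital commutative $\mathbf R_q$-algebra $(B,P)$ with an involution $\dagger$ (linear, $\dagger^2=\mathrm{id}$, $(xy)^\dagger=y^\dagger x^\dagger$) satisfying $P(x^\dagger)=P(x)^\dagger$. *)

(* Tensor algebra T(A) and T^+(A) are built as quotients
   (presented as setoids) of free K-modules {malg K[_]} on words. *)
From HB Require Import structures.
From mathcomp Require Import all_boot all_order all_algebra.
From mathcomp Require Import finmap.
From mathcomp Require Import monalg.

Set Implicit Arguments.
Unset Strict Implicit.
Unset Printing Implicit Defensive.

Import GRing.Theory.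
Local Open Scope ring_scope.

Inductive wtype (K : Type) : Type :=
  | Wtheta of K   (* Rota--Baxter of weight theta / quasi-shuffle *)
  | Wright        (* Nijenhuis / right-shift shuffle *)
  | Wleft.        (* TD / left-shift shuffle *)
Arguments Wright {K}.
Arguments Wleft {K}.

Section Tensor.
Variables (K : fieldType) (A : comAlgType K).

Definition lin_ext (T : choiceType) (V : lmodType K) (f : T -> V)
  (x : {malg K[T]}) : V :=
  \sum_(s <- msupp x) x@_s *: f s.

Definition bilin_ext (T1 T2 : choiceType) (V : lmodType K)
  (f : T1 -> T2 -> V) (x : {malg K[T1]}) (y : {malg K[T2]}) : V :=
  \sum_(s <- msupp x) \sum_(t <- msupp y) (x@_s * y@_t) *: f s t.

(* Free K-module on words; the word [:: a1; ...; an] stands for the pure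
   tensor a1 (x) ... (x) an, and [::] for 1_K. *)
Definition FT := {malg K[seq A]}.
Definition wvec (w : seq A) : FT := << w >>.

Definition consT (a : A) : FT -> FT := lin_ext (fun w => wvec (a :: w)).

Definition Mq (q : wtype K) (a b : A) (X : FT) : FT :=
  match q with
  | Wtheta th => th *: consT (a * b) X
  | Wright => - consT 1 (consT (a * b) X)
  | Wleft => - consT (a * b) (consT 1 X)
  end.

Fixpoint wmul (q : wtype K) (s t : seq A) {struct s} : FT :=
  match s with
  | [::] => wvec t
  | a :: u =>
      let fix wmul_t (t : seq A) : FT :=
        match t with
        | [::] => wvec (a :: u)
        | b :: v => consT a (wmul q u (b :: v)) + consT b (wmul_t v)
                    + Mq q a b (wmul q u v)
        end in
      wmul_t t
  end.

Definition tmul (q : wtype K) : FT -> FT -> FT := bilin_ext (wmul q).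

(* the subspace of multilinearity relations; T(A) = FT / tnull *)
Inductive tnull : FT -> Prop :=
  | tnull_gen (u v : seq A) (a b : A) (k : K) :
      tnull (wvec (u ++ (k *: a + b) :: v) - k *: wvec (u ++ a :: v)
             - wvec (u ++ b :: v))
  | tnull_add x y : tnull x -> tnull y -> tnull (x + y)
  | tnull_scale (k : K) x : tnull x -> tnull (k *: x).

Definition teqv (x y : FT) : Prop := tnull (x - y).

(* T^+(A) = A (x) T(A): free module on pairs (a, w) standing for a (x) w *)
Definition FP := {malg K[(A * seq A)%type]}.
Definition pvec (p : A * seq A) : FP := << p >>.

(* identification of A (x) T(A) with the positive-length part of T(A) *)
Definition flat : FP -> FT := lin_ext (fun p => wvec (p.1 :: p.2)).

Definition peqv (x y : FP) : Prop := teqv (flat x) (flat y).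

Definition pconsT (a : A) : FT -> FP := lin_ext (fun w => pvec (a, w)).

Definition pmul (q : wtype K) : FP -> FP -> FP :=
  bilin_ext (fun p p' => pconsT (p.1 * p'.1) (wmul q p.2 p'.2)).

Definition pone : FP := pvec (1, [::]).

Definition PA : FP -> FP := lin_ext (fun p => pvec (1, p.1 :: p.2)).

Definition pdag (dag : A -> A) : FP -> FP :=
  lin_ext (fun p => pvec (dag p.1, map dag p.2)).

Definition iA (a : A) : FP := pvec (a, [::]).

End Tensor.

Definition Rq_identity (K : fieldType) (V : lmodType K) (q : wtype K)
  (eqv : V -> V -> Prop) (mul : V -> V -> V) (one : V) (P : V -> V) :=
  forall x y : V,
    eqv (mul (P x) (P y))
      match q with
      | Wtheta th => P (mul (P x) y + mul x (P y)) + th *: P (mul x y)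
      | Wright => P (mul (P x) y + mul x (P y)) - P (P (mul x y))
      | Wleft => P (mul (P x) y + mul x (P y)) - P (mul (mul x (P one)) y)
      end.

(* An involutive commutative (unital) R_q-algebra, presented as a setoid:
   the carrier is V modulo the equivalence eqv (for an honest algebra take
   eqv := eq). *)
Record inv_comm_Rq_alg (K : fieldType) (V : lmodType K) (q : wtype K)
  (eqv : V -> V -> Prop) (mul : V -> V -> V) (one : V) (P dag : V -> V)
  : Prop := {
  eqv_refl : forall x, eqv x x;
  eqv_sym : forall x y, eqv x y -> eqv y x;
  eqv_trans : forall x y z, eqv x y -> eqv y z -> eqv x z;
  eqv_add : forall x x' y y', eqv x x' -> eqv y y' -> eqv (x + y) (x' + y');
  eqv_scale : forall (k : K) x x', eqv x x' -> eqv (k *: x) (k *: x');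
  eqv_mul : forall x x' y y', eqv x x' -> eqv y y' -> eqv (mul x y) (mul x' y');
  eqv_P : forall x x', eqv x x' -> eqv (P x) (P x');
  eqv_dag : forall x x', eqv x x' -> eqv (dag x) (dag x');
  mul_linear : forall (k : K) x y z,
      eqv (mul (k *: x + y) z) (k *: mul x z + mul y z);
  mul_assoc : forall x y z, eqv (mul x (mul y z)) (mul (mul x y) z);
  mul_comm : forall x y, eqv (mul x y) (mul y x);
  mul_one : forall x, eqv (mul one x) x;
  P_linear : forall (k : K) x y, eqv (P (k *: x + y)) (k *: P x + P y);
  P_Rq : Rq_identity q eqv mul one P;
  dag_linear : forall (k : K) x y, eqv (dag (k *: x + y)) (k *: dag x + dag y);
  dag_invol : forall x, eqv (dag (dag x)) x;
  dag_antimul : forall x y, eqv (dag (mul x y)) (mul (dag y) (dag x));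
  dag_P : forall x, eqv (P (dag x)) (dag (P x))
}.

Record Rq_morph (K : fieldType) (V : lmodType K) (X : comAlgType K)
  (eqv : V -> V -> Prop) (mulV : V -> V -> V) (oneV : V) (PV : V -> V)
  (PX : X -> X) (f : V -> X) : Prop := {
  morph_wd : forall x y, eqv x y -> f x = f y;
  morph_linear : forall (k : K) x y, f (k *: x + y) = k *: f x + f y;
  morph_mul : forall x y, f (mulV x y) = f x * f y;
  morph_one : f oneV = 1;
  morph_P : forall x, f (PV x) = PX (f x)
}.

(* T(A) is the free module on words modulo multilinearity, and T^+(A) is
   identified with its positive-length part; every operation is defined on
   words and then checked to preserve the multilinearity relations.
   The shuffle recursion for bullet^q is commutative on words by induction, and
   associative because the triple product ((a X)(b Y))(c Z) expands into seven
   terms that are merely permuted when (a X, b Y, c Z) is rotated cyclically;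
   commutativity then turns rotation invariance into associativity.  On pure
   tensors, (1 (x) a U)(1 (x) b V) = 1 (x) ((a U) bullet^q (b V)), and the
   recursion for the inner product is literally the R_q identity.
   Freeness: a morphism psi extending phi must satisfy
   psi (a0 (x) a1 (x) U) = phi a0 * P (psi (a1 (x) U)), which forces
   psi (a0 (x) ... (x) an) = phi a0 * P (phi a1 * P ( ... P (phi an))), and this
   formula is multiplicative by induction along the shuffle recursion, using
   the R_q identity in the target. *)

From Pilot Require Import Defs.
From mathcomp Require Import all_boot all_order all_algebra.
From mathcomp Require Import finmap monalg.
From mathcomp Require Import zify ring.

Set Implicit Arguments.
Unset Strict Implicit.
Unset Printing Implicit Defensive.

Import GRing.Theory.
Local Open Scope ring_scope.

(** * Linear maps on free modules *)

Section LinearFun.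
Variables (K : fieldType) (U W : lmodType K) (L : U -> W).
Hypothesis linL : linear L.

Lemma lin0 : L 0 = 0.
Proof.
have := linL 1 0 0; rewrite !scale1r addr0 => /eqP.
by rewrite -subr_eq subrr eq_sym => /eqP.
Qed.

Lemma linD x y : L (x + y) = L x + L y.
Proof. by rewrite -[x in LHS]scale1r linL scale1r. Qed.

Lemma linZ k x : L (k *: x) = k *: L x.
Proof. by rewrite -[k *: x]addr0 linL lin0 addr0. Qed.

Lemma linN x : L (- x) = - L x.
Proof. by rewrite -scaleN1r linZ scaleN1r. Qed.

Lemma linB x y : L (x - y) = L x - L y.
Proof. by rewrite linD linN. Qed.

Lemma linZBB k x y z : L x - k *: L y - L z = L (x - k *: y - z).
Proof. by rewrite !linB linZ. Qed.

Lemma lin_sum (I : Type) (r : seq I) (F : I -> U) :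
  L (\sum_(i <- r) F i) = \sum_(i <- r) L (F i).
Proof. by elim: r => [|i r IH]; rewrite ?big_nil ?lin0 // !big_cons linD IH. Qed.

End LinearFun.

Section LinearClosure.
Variables (K : fieldType) (U V W : lmodType K).

Lemma linear_id : linear (fun x : U => x).
Proof. by []. Qed.

Lemma linear_compf (f : V -> W) (g : U -> V) :
  linear f -> linear g -> linear (fun x => f (g x)).
Proof. by move=> hf hg k x y; rewrite hg hf. Qed.

Lemma linear_addf (f g : U -> W) :
  linear f -> linear g -> linear (fun x => f x + g x).
Proof. by move=> hf hg k x y; rewrite hf hg scalerDr addrACA. Qed.

Lemma linear_oppf (f : U -> W) : linear f -> linear (fun x => - f x).
Proof. by move=> hf k x y; rewrite hf opprD scalerN. Qed.

Lemma linear_scalef (c : K) (f : U -> W) : linear f -> linear (fun x => c *: f x).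
Proof. by move=> hf k x y; rewrite hf scalerDr !scalerA mulrC. Qed.

Lemma addrC12 (x y z : U) : x + y + z = y + x + z.
Proof. by rewrite (addrC x). Qed.

Lemma add3ZBB (k : K) (x1 x2 x3 y1 y2 y3 z1 z2 z3 : U) :
  (x1 + x2 + x3) - k *: (y1 + y2 + y3) - (z1 + z2 + z3) =
  (x1 - k *: y1 - z1) + (x2 - k *: y2 - z2) + (x3 - k *: y3 - z3).
Proof. by rewrite !scalerDr !opprD !addrA (ACl (1*4*7*2*5*8*3*6*9)). Qed.

End LinearClosure.

Section AlgebraLinear.
Variables (K : fieldType) (U : lmodType K) (X : comAlgType K).

Lemma linear_mull (c : X) (f : U -> X) : linear f -> linear (fun x => c * f x).
Proof. by move=> hf k x y; rewrite hf mulrDr scalerAr. Qed.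

Lemma linear_mulr (c : X) (f : U -> X) : linear f -> linear (fun x => f x * c).
Proof. by move=> hf k x y; rewrite hf mulrDl scalerAl. Qed.

End AlgebraLinear.

Create HintDb linear_maps.

(* The hints of [linear_maps] are keyed on the exact shape [fun z => f .. z ..]:
   a failed unification against a map defined through [lin_ext] unfolds the
   underlying sums, which is very slow. *)

Ltac linearity :=
  solve [repeat match goal with
  | |- forall _, _ => move=> ?
  | |- linear ?f =>
      lazymatch f with (fun _ => _) => fail | _ => change (linear (fun x => f x)) end
  | |- linear (fun x => x) => exact: linear_id
  | |- linear (fun x => _ + _) => apply: linear_addf
  | |- linear (fun x => - _) => apply: linear_oppf
  | |- linear (fun x => _ *: _) => apply: linear_scalef
  | |- linear (fun x => _ * _) => first [apply: linear_mull | apply: linear_mulr]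
  | |- linear _ => solve [auto with linear_maps]
  | |- linear (fun x => ?f (@?g x)) =>
      lazymatch g with (fun x => x) => fail | _ =>
        apply: (linear_compf (f := f) (g := g)) end
  | |- linear (fun x => ?f (@?g x) ?y) =>
      lazymatch g with (fun x => x) => fail | _ =>
        apply: (linear_compf (f := fun z => f z y) (g := g)) end
  end].

Section FreeModule.
Variables (K : fieldType) (T : choiceType) (V : lmodType K).

Lemma lin_ext_fsubset (f : T -> V) (x : {malg K[T]}) (d : {fset T}) :
  (msupp x `<=` d)%fset -> lin_ext f x = \sum_(s <- d) x@_s *: f s.
Proof.
move=> le; rewrite /lin_ext (big_fset_incl _ le) //= => s _ /mcoeff_outdom ->.
by rewrite scale0r.
Qed.

Lemma lin_ext_linear (f : T -> V) : linear (lin_ext f).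
Proof.
move=> k x y; set d := (msupp x `|` msupp y)%fset.
rewrite (@lin_ext_fsubset f (k *: x + y) d); last first.
  by apply: fsubset_trans (msuppD_le _ _) _; rewrite fsetSU // msuppZ_le.
rewrite (@lin_ext_fsubset f x d) ?fsubsetUl // (@lin_ext_fsubset f y d) ?fsubsetUr //.
rewrite scaler_sumr -big_split /=; apply: eq_bigr => s _.
by rewrite mcoeffD mcoeffZ scalerDl scalerA.
Qed.

Lemma lin_extU (f : T -> V) s : lin_ext f << s >> = f s.
Proof.
by rewrite (@lin_ext_fsubset f _ _ msuppU_le) big_seq_fset1 mcoeffUU scale1r.
Qed.

Lemma lin_ext_ext (f g : T -> V) x : f =1 g -> lin_ext f x = lin_ext g x.
Proof. by move=> e; apply: eq_bigr => s _; rewrite e. Qed.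

Lemma lin_ext_scaleD (f g : T -> V) k x :
  lin_ext (fun s => k *: f s + g s) x = k *: lin_ext f x + lin_ext g x.
Proof.
rewrite /lin_ext scaler_sumr -big_split /=; apply: eq_bigr => s _.
by rewrite scalerDr !scalerA mulrC.
Qed.

Lemma linear_lin_ext (L : {malg K[T]} -> V) : linear L ->
  forall x, L x = lin_ext (fun s => L << s >>) x.
Proof.
move=> linL x; rewrite {1}(monalgE x) (lin_sum linL).
apply: eq_bigr => s _; rewrite -(linZ linL); congr (L _).
by apply/malgP => s'; rewrite mcoeffZ !mcoeffU; case: eqP; rewrite ?mulr1 ?mulr0.
Qed.

Lemma lin_eq (L1 L2 : {malg K[T]} -> V) : linear L1 -> linear L2 ->
  (forall s, L1 << s >> = L2 << s >>) -> L1 =1 L2.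
Proof.
move=> h1 h2 e x; rewrite (linear_lin_ext h1) (linear_lin_ext h2).
exact: lin_ext_ext.
Qed.

Lemma lin_ind (R : V -> Prop) (L : {malg K[T]} -> V) : linear L ->
  R 0 -> (forall x y, R x -> R y -> R (x + y)) ->
  (forall k x, R x -> R (k *: x)) ->
  (forall s, R (L << s >>)) -> forall x, R (L x).
Proof.
move=> linL R0 RD RZ Rs x; rewrite (linear_lin_ext linL) /lin_ext.
elim: (msupp x : seq T) => [|s r IH]; first by rewrite big_nil.
by rewrite big_cons; apply: RD => //; apply: RZ.
Qed.

End FreeModule.

Section Bilinear.
Variables (K : fieldType) (T1 T2 : choiceType) (V : lmodType K).

Section BilinExt.
Variable f : T1 -> T2 -> V.

Lemma bilin_extE x y : bilin_ext f x y = lin_ext (fun s => lin_ext (f s) y) x.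
Proof.
rewrite /bilin_ext /lin_ext; apply: eq_bigr => s _.
by rewrite scaler_sumr; apply: eq_bigr => t _; rewrite scalerA.
Qed.

Lemma bilin_extU s t : bilin_ext f << s >> << t >> = f s t.
Proof. by rewrite bilin_extE !lin_extU. Qed.

Lemma bilin_ext_linear_l y : linear (bilin_ext f ^~ y).
Proof. by move=> k x x'; rewrite !bilin_extE lin_ext_linear. Qed.

Lemma bilin_ext_linear_r x : linear (bilin_ext f x).
Proof.
move=> k y y'; rewrite !bilin_extE -lin_ext_scaleD.
by apply: lin_ext_ext => s; rewrite lin_ext_linear.
Qed.

End BilinExt.

Lemma bilin_eq (F G : {malg K[T1]} -> {malg K[T2]} -> V) :
  (forall y, linear (F ^~ y)) -> (forall x, linear (F x)) ->
  (forall y, linear (G ^~ y)) -> (forall x, linear (G x)) ->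
  (forall s t, F << s >> << t >> = G << s >> << t >>) ->
  forall x y, F x y = G x y.
Proof.
move=> F1 F2 G1 G2 e x y; apply: (lin_eq (F1 y) (G1 y)) => s.
exact: (lin_eq (F2 _) (G2 _)).
Qed.

End Bilinear.

Lemma bilin_ext_comm (K : fieldType) (T : choiceType) (V : lmodType K)
    (f : T -> T -> V) : (forall s t, f s t = f t s) ->
  forall x y, bilin_ext f x y = bilin_ext f y x.
Proof.
move=> fC; apply: bilin_eq => [y|x|x|y|s t].
- exact: bilin_ext_linear_l.
- exact: bilin_ext_linear_r.
- exact: bilin_ext_linear_r.
- exact: bilin_ext_linear_l.
by rewrite !bilin_extU.
Qed.

(** * Words, shuffles and the multilinearity relations *)

Section MultilinearityRelations.
Variables (K : fieldType) (A : comAlgType K).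
Implicit Types (x y z : FT A) (a b c : A) (u v w : seq A).

Lemma tnull0 : tnull (0 : FT A).
Proof. by have := tnull_scale 0 (@tnull_gen K A [::] [::] 0 0 0); rewrite scale0r. Qed.

Lemma tnullN x : tnull x -> tnull (- x).
Proof. by move/(tnull_scale (-1)); rewrite scaleN1r. Qed.

Lemma teqv_refl x : teqv x x.
Proof. by rewrite /teqv subrr; apply: tnull0. Qed.

Lemma teqv_sym x y : teqv x y -> teqv y x.
Proof. by rewrite /teqv => /tnullN; rewrite opprB. Qed.

Lemma teqv_trans x y z : teqv x y -> teqv y z -> teqv x z.
Proof. by rewrite /teqv => h1 h2; have := tnull_add h1 h2; rewrite addrA subrK. Qed.

Lemma tnull_lin_ind (L : FT A -> FT A) : linear L ->
  (forall u v a b k, tnull (L (wvec (u ++ (k *: a + b) :: v)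
                               - k *: wvec (u ++ a :: v) - wvec (u ++ b :: v)))) ->
  forall x, tnull x -> tnull (L x).
Proof.
move=> linL hgen x; elim=> [u v a b k|y z _ hy _ hz|k y _ hy].
- exact: hgen.
- by rewrite (linD linL); apply: tnull_add.
- by rewrite (linZ linL); apply: tnull_scale.
Qed.

Lemma tnull_basis (L : FT A -> FT A) : linear L ->
  (forall s, tnull (L (wvec s))) -> forall x, tnull (L x).
Proof.
move=> linL hs x; apply: (lin_ind (R := @tnull K A) linL) => //; first exact: tnull0.
- by move=> ? ?; apply: tnull_add.
- by move=> ? ?; apply: tnull_scale.
Qed.

Lemma consT_linear a : linear (consT a).
Proof. exact: lin_ext_linear. Qed.

Lemma consTU a w : consT a (wvec w) = wvec (a :: w).
Proof. exact: lin_extU. Qed.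

Lemma consTD a x y : consT a (x + y) = consT a x + consT a y.
Proof. exact: (linD (consT_linear a)). Qed.

Lemma consTN a x : consT a (- x) = - consT a x.
Proof. exact: (linN (consT_linear a)). Qed.

Lemma consTZ a k x : consT a (k *: x) = k *: consT a x.
Proof. exact: (linZ (consT_linear a)). Qed.

Lemma consT_tnull a x : tnull x -> tnull (consT a x).
Proof.
apply: tnull_lin_ind; first exact: consT_linear.
move=> u v b c k; rewrite !(linB (consT_linear a)) (linZ (consT_linear a)) !consTU.
exact: (tnull_gen (a :: u)).
Qed.

End MultilinearityRelations.

#[export] Hint Extern 1 (linear (fun z => consT _ z)) => exact: consT_linear : linear_maps.


Section Shuffle.
Variables (K : fieldType) (A : comAlgType K) (q : wtype K).
Local Notation Mq := (@Mq K A q).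
Local Notation wmul := (@wmul K A q).
Implicit Types (x : FT A) (a b c : A) (u v w : seq A).

Lemma consT_letter_tnull (k : K) (a b : A) x :
  tnull (consT (k *: a + b) x - k *: consT a x - consT b x).
Proof.
apply: (tnull_basis (L := fun x => consT (k *: a + b) x - k *: consT a x - consT b x)).
  by linearity.
by move=> s; rewrite !consTU; apply: (tnull_gen [::]).
Qed.

Lemma Mq_linear a b : linear (Mq a b).
Proof. by case: q => [th||]; rewrite /Defs.Mq; linearity. Qed.

Lemma Mq_tnull a b x : tnull x -> tnull (Mq a b x).
Proof.
case: q => [th||] /= h.
- by apply: tnull_scale; apply: consT_tnull.
- by apply: tnullN; do 2 apply: consT_tnull.
- by apply: tnullN; do 2 apply: consT_tnull.
Qed.

Lemma Mq_letter_tnull (k : K) a b c x :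
  tnull (Mq (k *: a + b) c x - k *: Mq a c x - Mq b c x).
Proof.
case: q => [th||] /=; rewrite mulrDl -scalerAl.
- rewrite (linZBB (L := fun y => th *: y)); last by linearity.
  by apply: tnull_scale; apply: consT_letter_tnull.
- rewrite (linZBB (L := fun y => - consT 1 y)); last by linearity.
  by apply: tnullN; apply: consT_tnull; apply: consT_letter_tnull.
- rewrite (linZBB (L := fun y => - y)); last by linearity.
  by apply: tnullN; apply: consT_letter_tnull.
Qed.

Lemma Mq_comm a b x : Mq a b x = Mq b a x.
Proof. by case: q => [th||] /=; rewrite mulrC. Qed.

Lemma wmul_cons a u b v : wmul (a :: u) (b :: v) =
  consT a (wmul u (b :: v)) + consT b (wmul (a :: u) v) + Mq a b (wmul u v).
Proof. by []. Qed.

Lemma wmul_nil_l t : wmul [::] t = wvec t.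
Proof. by []. Qed.

Lemma wmul_nil_r s : wmul s [::] = wvec s.
Proof. by case: s. Qed.

Lemma wmul_comm s t : wmul s t = wmul t s.
Proof.
elim: s t => [|a u IHu] t; first by rewrite wmul_nil_r.
elim: t => [|b v IHv]; first by rewrite wmul_nil_r.
by rewrite !wmul_cons IHv IHu -(IHu v) Mq_comm (addrC (consT a _)).
Qed.

Lemma wmul_tnull_l u v (k : K) a b t :
  tnull (wmul (u ++ (k *: a + b) :: v) t - k *: wmul (u ++ a :: v) t
         - wmul (u ++ b :: v) t).
Proof.
have consT_tnullZBB c x y z : tnull (x - k *: y - z) ->
    tnull (consT c x - k *: consT c y - consT c z).
  by rewrite (linZBB (consT_linear c)); apply: consT_tnull.
elim: u t => [|e u IHu] t; elim: t => [|d t IHt]; rewrite ?wmul_nil_r.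
- exact: (tnull_gen [::]).
- rewrite !cat0s !wmul_cons add3ZBB; apply: tnull_add; first apply: tnull_add.
  + exact: consT_letter_tnull.
  + exact: consT_tnullZBB.
  + exact: Mq_letter_tnull.
- exact: (tnull_gen (e :: u)).
- rewrite !cat_cons !wmul_cons add3ZBB; apply: tnull_add; first apply: tnull_add.
  + exact: consT_tnullZBB.
  + exact: consT_tnullZBB.
  + by rewrite (linZBB (Mq_linear _ _)); apply: Mq_tnull.
Qed.

End Shuffle.

Arguments Defs.wmul : simpl never.

(** * Well-definedness on T^+(A) *)

Section PositiveTensors.
Context {K : fieldType} {A : comAlgType K}.
Implicit Types (a : A) (w : seq A).

Lemma flat_linear : linear (@flat K A). Proof. exact: lin_ext_linear. Qed.
Lemma flatU a w : flat (pvec (a, w)) = wvec (a :: w). Proof. exact: lin_extU. Qed.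
Lemma pconsT_linear a : linear (pconsT a). Proof. exact: lin_ext_linear. Qed.
Lemma pconsTU a w : pconsT a (wvec w) = pvec (a, w). Proof. exact: lin_extU. Qed.
Lemma PA_linear : linear (@PA K A). Proof. exact: lin_ext_linear. Qed.
Lemma PAU a w : PA (pvec (a, w)) = pvec (1, a :: w). Proof. exact: lin_extU. Qed.

End PositiveTensors.

#[export] Hint Extern 1 (linear (fun z => flat z)) => exact: flat_linear : linear_maps.
#[export] Hint Extern 1 (linear (fun z => pconsT _ z)) => exact: pconsT_linear : linear_maps.
#[export] Hint Extern 1 (linear (fun z => PA z)) => exact: PA_linear : linear_maps.

Section TensorProducts.
Variables (K : fieldType) (A : comAlgType K) (q : wtype K).
Local Notation wmul := (@wmul K A q).
Local Notation tmul := (@tmul K A q).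
Local Notation pmul := (@pmul K A q).
Implicit Types (a b c : A) (u v w : seq A).

Lemma tmul_linear_l y : linear (tmul ^~ y). Proof. exact: bilin_ext_linear_l. Qed.
Lemma tmul_linear_r x : linear (tmul x). Proof. exact: bilin_ext_linear_r. Qed.
Lemma tmulU s t : tmul (wvec s) (wvec t) = wmul s t. Proof. exact: bilin_extU. Qed.
Lemma tmulC x y : tmul x y = tmul y x.
Proof. by apply: bilin_ext_comm => s t; apply: wmul_comm. Qed.

Lemma pmul_linear_l y : linear (pmul ^~ y). Proof. exact: bilin_ext_linear_l. Qed.
Lemma pmul_linear_r x : linear (pmul x). Proof. exact: bilin_ext_linear_r. Qed.
Lemma pmulU p p' :
  pmul (pvec p) (pvec p') = pconsT (p.1 * p'.1) (wmul p.2 p'.2).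
Proof. exact: bilin_extU. Qed.
Lemma pmulC x y : pmul x y = pmul y x.
Proof. by apply: bilin_ext_comm => p p'; rewrite mulrC wmul_comm. Qed.

End TensorProducts.

#[export] Hint Extern 1 (linear (fun z => tmul _ z _)) => exact: tmul_linear_l : linear_maps.
#[export] Hint Extern 1 (linear (fun z => tmul _ _ z)) => exact: tmul_linear_r : linear_maps.
#[export] Hint Extern 1 (linear (fun z => pmul _ z _)) => exact: pmul_linear_l : linear_maps.
#[export] Hint Extern 1 (linear (fun z => pmul _ _ z)) => exact: pmul_linear_r : linear_maps.
#[export] Hint Extern 1 (linear (fun z => Mq _ _ _ z)) => exact: Mq_linear : linear_maps.


Section Flattening.
Variables (K : fieldType) (A : comAlgType K) (q : wtype K).
Local Notation wmul := (@wmul K A q).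
Local Notation pmul := (@pmul K A q).
Implicit Types (W X Y : FT A) (x y : FP A) (a b c : A) (u v w : seq A).

Lemma flat_pconsT c W : flat (pconsT c W) = consT c W.
Proof.
move: W; apply: lin_eq; try linearity.
by move=> w; rewrite pconsTU flatU consTU.
Qed.

Lemma flat_PA x : flat (PA x) = consT 1 (flat x).
Proof.
move: x; apply: lin_eq; try linearity.
by case=> a w; rewrite PAU !flatU consTU.
Qed.

(* The product of T^+(A) transported along [flat]. *)
Definition wmul_plus (s t : seq A) : FT A :=
  match s, t with a :: u, b :: v => consT (a * b) (wmul u v) | _, _ => 0 end.

Definition tmul_plus : FT A -> FT A -> FT A := bilin_ext wmul_plus.

Lemma tmul_plus_linear_l Y : linear (tmul_plus ^~ Y).
Proof. exact: bilin_ext_linear_l. Qed.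

Lemma tmul_plus_linear_r X : linear (tmul_plus X).
Proof. exact: bilin_ext_linear_r. Qed.

Local Hint Extern 1 (linear (fun z => tmul_plus z _)) => exact: tmul_plus_linear_l : linear_maps.
Local Hint Extern 1 (linear (fun z => tmul_plus _ z)) => exact: tmul_plus_linear_r : linear_maps.

Lemma flat_pmul x y : flat (pmul x y) = tmul_plus (flat x) (flat y).
Proof.
move: x y; apply: bilin_eq; try linearity.
by case=> a u [b v]; rewrite pmulU flat_pconsT !flatU /tmul_plus bilin_extU.
Qed.

Lemma tmul_plusC X Y : tmul_plus X Y = tmul_plus Y X.
Proof.
apply: (bilin_ext_comm (f := wmul_plus)) => -[|a u] [|b v] /=;
  [by [] | by [] | by [] | by rewrite mulrC wmul_comm].
Qed.

Lemma tmul_plus_tnull_l X Y : tnull X -> tnull (tmul_plus X Y).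
Proof.
apply: (tnull_lin_ind (L := tmul_plus ^~ Y)); first by linearity.
move=> u v a b k; rewrite -(linZBB (tmul_plus_linear_l Y)).
move: Y; apply: tnull_basis; first by linearity.
case=> [|d t]; rewrite /tmul_plus !bilin_extU /wmul_plus.
  by case: u => [|e u] /=; rewrite scaler0 !subr0; apply: tnull0.
case: u => [|e u] /=.
  by rewrite mulrDl -scalerAl; apply: consT_letter_tnull.
by rewrite (linZBB (consT_linear _)); apply: consT_tnull; apply: wmul_tnull_l.
Qed.

Lemma tmul_plus_tnull_r X Y : tnull Y -> tnull (tmul_plus X Y).
Proof. by rewrite tmul_plusC; apply: tmul_plus_tnull_l. Qed.

End Flattening.

Section TensorInvolution.
Variables (K : fieldType) (A : comAlgType K) (dag : A -> A).
Implicit Types (a : A) (w : seq A).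

Definition tdag : FT A -> FT A := lin_ext (fun w => wvec (map dag w)).

Lemma tdag_linear : linear tdag. Proof. exact: lin_ext_linear. Qed.
Lemma tdagU w : tdag (wvec w) = wvec (map dag w). Proof. exact: lin_extU. Qed.
Lemma pdag_linear : linear (pdag dag). Proof. exact: lin_ext_linear. Qed.
Lemma pdagU a w : pdag dag (pvec (a, w)) = pvec (dag a, map dag w).
Proof. exact: lin_extU. Qed.

End TensorInvolution.

#[export] Hint Extern 1 (linear (fun z => tdag _ z)) => exact: tdag_linear : linear_maps.
#[export] Hint Extern 1 (linear (fun z => pdag _ z)) => exact: pdag_linear : linear_maps.

Section Congruence.
Variables (K : fieldType) (A : comAlgType K) (q : wtype K).
Local Notation pmul := (@pmul K A q).
Implicit Types (W : FT A) (x y : FP A) (a b c : A) (u v w : seq A).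

Lemma peqv_refl x : peqv x x. Proof. exact: teqv_refl. Qed.
Lemma peqv_sym x y : peqv x y -> peqv y x. Proof. exact: teqv_sym. Qed.
Lemma peqv_trans x y z : peqv x y -> peqv y z -> peqv x z.
Proof. exact: teqv_trans. Qed.

Lemma eq_peqv x y : x = y -> peqv x y.
Proof. by move=> ->; apply: peqv_refl. Qed.

Lemma peqv_add x x' y y' : peqv x x' -> peqv y y' -> peqv (x + y) (x' + y').
Proof.
rewrite /peqv /teqv !(linD flat_linear) opprD addrACA.
exact: tnull_add.
Qed.

Lemma peqv_scale (k : K) x x' : peqv x x' -> peqv (k *: x) (k *: x').
Proof. by rewrite /peqv /teqv !(linZ flat_linear) -scalerBr; apply: tnull_scale. Qed.

Lemma peqv_mul x x' y y' : peqv x x' -> peqv y y' -> peqv (pmul x y) (pmul x' y').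
Proof.
rewrite /peqv /teqv !flat_pmul => hx hy.
have -> : tmul_plus q (flat x) (flat y) - tmul_plus q (flat x') (flat y') =
    tmul_plus q (flat x - flat x') (flat y) + tmul_plus q (flat x') (flat y - flat y').
  by rewrite (linB (tmul_plus_linear_l _ _)) (linB (tmul_plus_linear_r _ _)) addrA subrK.
by apply: tnull_add; [apply: tmul_plus_tnull_l | apply: tmul_plus_tnull_r].
Qed.

Lemma peqv_PA x x' : peqv x x' -> peqv (PA x) (PA x').
Proof. by rewrite /peqv /teqv !flat_PA -(linB (consT_linear _)); apply: consT_tnull. Qed.

Variables (dag : A -> A) (dag_linear : linear dag).

Lemma flat_pdag x : flat (pdag dag x) = tdag dag (flat x).
Proof.
move: x; apply: lin_eq; try linearity.
by case=> a w; rewrite pdagU !flatU tdagU.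
Qed.

Lemma tdag_tnull W : tnull W -> tnull (tdag dag W).
Proof.
apply: tnull_lin_ind; first exact: tdag_linear.
move=> u v a b k; rewrite -(linZBB (tdag_linear _)) !tdagU !map_cat /= dag_linear.
exact: tnull_gen.
Qed.

Lemma peqv_pdag x x' : peqv x x' -> peqv (pdag dag x) (pdag dag x').
Proof. by rewrite /peqv /teqv !flat_pdag -(linB (tdag_linear _)); apply: tdag_tnull. Qed.

End Congruence.

(** * Associativity of the shuffle products *)

Section LeftShift.
Variables (K : fieldType) (A : comAlgType K).
Local Notation wmul := (@wmul K A Wleft).
Local Notation tmul := (@tmul K A Wleft).
Implicit Types (x y : FT A) (a b c : A) (u v w : seq A).

Lemma wmul_left_unit w t : wmul (1 :: w) t = consT 1 (wmul w t).
Proof.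
elim: t => [|d t IH]; first by rewrite !wmul_nil_r consTU.
by rewrite wmul_cons IH /= mul1r addrK.
Qed.

Lemma tmul_left_unit x y :
  tmul (consT 1 x) y = consT 1 (tmul x y).
Proof.
move: x y; apply: bilin_eq; try linearity.
by move=> s t; rewrite consTU !tmulU wmul_left_unit.
Qed.

End LeftShift.

Section ShuffleRecursion.
Variables (K : fieldType) (A : comAlgType K) (q : wtype K).
Local Notation Mq := (@Mq K A q).
Local Notation wmul := (@wmul K A q).
Local Notation tmul := (@tmul K A q).
Implicit Types (x y z : FT A) (a b c : A) (u v w : seq A).

Lemma tmul1l y : tmul (wvec [::]) y = y.
Proof.
move: y; apply: (lin_eq (L2 := id)); try linearity.
by move=> t; rewrite tmulU wmul_nil_l.
Qed.

Lemma tmul1r x : tmul x (wvec [::]) = x.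
Proof. by rewrite tmulC tmul1l. Qed.

Lemma tmulDl x y z : tmul (x + y) z = tmul x z + tmul y z.
Proof. exact: (linD (tmul_linear_l _ _)). Qed.

Lemma tmulNl x y : tmul (- x) y = - tmul x y.
Proof. exact: (linN (tmul_linear_l _ _)). Qed.

Lemma tmulZl k x y : tmul (k *: x) y = k *: tmul x y.
Proof. exact: (linZ (tmul_linear_l _ _)). Qed.

Lemma tmul_consT a b x y :
  tmul (consT a x) (consT b y) =
  consT a (tmul x (consT b y)) + consT b (tmul (consT a x) y) + Mq a b (tmul x y).
Proof.
move: x y; apply: bilin_eq; try linearity.
by move=> s t; rewrite !consTU !tmulU wmul_cons.
Qed.

End ShuffleRecursion.

Section TripleProducts.
Variables (K : fieldType) (A : comAlgType K) (q : wtype K).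
Local Notation Mq := (@Mq K A q).
Local Notation tmul := (@tmul K A q).
Implicit Types (W X Y Z : FT A) (a b c : A) (u v w : seq A).

(* The term produced when the M_q-term of two letters meets a third letter. *)
Definition Mq3 (a b c : A) (W : FT A) : FT A :=
  match q with
  | Wtheta th => (th * th) *: consT (a * b * c) W
  | Wright => consT 1 (consT 1 (consT (a * b * c) W))
  | Wleft => consT (a * b * c) (consT 1 (consT 1 W))
  end.

Lemma tmul_Mq a b c W Z :
  tmul (Mq a b W) (consT c Z) =
  Mq a b (tmul W (consT c Z)) + consT c (tmul (Mq a b W) Z) + Mq3 a b c (tmul W Z).
Proof.
rewrite /Mq3; case: q => [th||] /=.
(* Plain [rewrite ->] matches syntactically, whereas ssreflect's [rewrite]
   tries to unfold [consT] and [tmul] on each near-miss, which is very slow. *)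
- rewrite -> !tmulZl, tmul_consT, consTZ.
  by rewrite !scalerDr scalerA.
- rewrite -> !tmulNl, !tmul_consT; rewrite /= mul1r.
  rewrite -> consTN, !consTD, !consTN.
  have zmodE (P Q R S : FT A) : - (P + Q - R + S - Q) = - P - S + R.
    by rewrite addrAC [P + Q - R - Q]addrAC addrK !opprD opprK addrAC.
  exact: zmodE.
- rewrite -> !tmulNl, tmul_consT, !tmul_left_unit; rewrite /=.
  rewrite -> (consTN c).
  have zmodE (P Q R : FT A) : - (P + Q - R) = - P - Q + R by rewrite !opprD opprK.
  exact: zmodE.
Qed.

Lemma Mq3_rotate a b c W : Mq3 b c a W = Mq3 a b c W.
Proof. by rewrite /Mq3 mulrC mulrA. Qed.

Local Notation tmul3 u v w := (tmul (tmul u v) w).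

Definition tmul3_expand a X b Y c Z :=
  consT a (tmul3 X (consT b Y) (consT c Z))
  + consT b (tmul3 (consT a X) Y (consT c Z))
  + consT c (tmul3 (consT a X) (consT b Y) Z)
  + Mq a c (tmul3 X (consT b Y) Z)
  + Mq b c (tmul3 (consT a X) Y Z)
  + Mq a b (tmul3 X Y (consT c Z))
  + Mq3 a b c (tmul3 X Y Z).

Lemma tmul3_consT a X b Y c Z :
  tmul3 (consT a X) (consT b Y) (consT c Z) = tmul3_expand a X b Y c Z.
Proof.
rewrite /tmul3_expand; rewrite -> tmul_consT, !tmulDl, !tmul_consT, tmul_Mq, !consTD.
have zmodE (x1 x2 x3 x4 x5 x6 x7 x8 x9 : FT A) :
    x1 + x2 + x3 + (x4 + x5 + x6) + (x7 + x8 + x9) =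
    x1 + x4 + (x2 + x5 + x8) + x3 + x6 + x7 + x9.
  by rewrite !addrA (ACl (1*4*2*5*8*3*6*7*9)).
exact: zmodE.
Qed.

Lemma tmul3_rotate_words n s t r : (size s + size t + size r <= n)%N ->
  tmul3 (wvec s) (wvec t) (wvec r) = tmul3 (wvec t) (wvec r) (wvec s).
Proof.
elim: n s t r => [|n IH] s t r.
all: case: s => [|a X]; [by rewrite -> tmul1l, tmul1r |].
all: case: t => [|b Y]; [by rewrite -> tmul1r, tmul1l, tmulC |].
all: case: r => [|c Z]; [by rewrite -> !tmul1r, tmulC |].
  by move=> /= hn; exfalso; lia.
move=> /= hn.
rewrite <- !consTU; rewrite -> !tmul3_consT; rewrite /tmul3_expand; rewrite -> !consTU.
have sum7P (x1 x2 x3 x4 x5 x6 x7 : FT A) :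
    x1 + x2 + x3 + x4 + x5 + x6 + x7 = x2 + x3 + x1 + x6 + x4 + x5 + x7.
  by rewrite (ACl (2*3*1*6*4*5*7)).
rewrite -> sum7P, (Mq_comm _ b a), (Mq_comm _ c a), <- (Mq3_rotate a).
have sum7_congr (x1 x2 x3 x4 x5 x6 x7 y1 y2 y3 y4 y5 y6 y7 : FT A) :
    x1 = y1 -> x2 = y2 -> x3 = y3 -> x4 = y4 -> x5 = y5 -> x6 = y6 -> x7 = y7 ->
    x1 + x2 + x3 + x4 + x5 + x6 + x7 = y1 + y2 + y3 + y4 + y5 + y6 + y7.
  by move=> -> -> -> -> -> -> ->.
apply: sum7_congr; rewrite -> IH; solve [reflexivity | rewrite /=; lia].
Qed.

Lemma tmulA x y z : tmul x (tmul y z) = tmul (tmul x y) z.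
Proof.
move: x; apply: lin_eq; try linearity; move=> s /=.
move: y z; apply: bilin_eq; try linearity; move=> t r.
rewrite -> tmulC.
exact: esym (tmul3_rotate_words (s := s) (t := t) (r := r) (leqnn _)).
Qed.

End TripleProducts.

(** * T^+(A) is an involutive commutative R_q-algebra *)

Section PositiveAlgebra.
Variables (K : fieldType) (A : comAlgType K) (q : wtype K).
Local Notation Mq := (@Mq K A q).
Local Notation wmul := (@wmul K A q).
Local Notation tmul := (@tmul K A q).
Local Notation pmul := (@pmul K A q).
Implicit Types (W : FT A) (x y z : FP A) (a b c : A) (u v w : seq A).

Lemma pmul_pconsT a U c W :
  pmul (pvec (a, U)) (pconsT c W) = pconsT (a * c) (tmul (wvec U) W).
Proof.
move: W; apply: lin_eq; try linearity.
by move=> w; rewrite pconsTU pmulU tmulU.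
Qed.

Lemma pmul_pconsT_l c W b V :
  pmul (pconsT c W) (pvec (b, V)) = pconsT (c * b) (tmul W (wvec V)).
Proof.
move: W; apply: lin_eq; try linearity.
by move=> w; rewrite pconsTU pmulU tmulU.
Qed.

Lemma pmulA x y z : pmul x (pmul y z) = pmul (pmul x y) z.
Proof.
move: x; apply: lin_eq; try linearity; case=> a U /=.
move: y z; apply: bilin_eq; try linearity; case=> b V [c W] /=.
rewrite 2!pmulU /= pmul_pconsT pmul_pconsT_l.
by rewrite -!tmulU tmulA mulrA.
Qed.

Lemma pmul1l x : pmul (pone A) x = x.
Proof.
move: x; apply: (lin_eq (L2 := id)); try linearity.
by case=> a w; rewrite pmulU /= mul1r wmul_nil_l pconsTU.
Qed.

Lemma PA_pconsT c W : PA (pconsT c W) = pconsT 1 (consT c W).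
Proof.
move: W; apply: lin_eq; try linearity.
by move=> w; rewrite pconsTU PAU consTU pconsTU.
Qed.

Lemma pvec_cons a b w : pvec (a, b :: w) = pmul (iA a) (PA (pvec (b, w))).
Proof. by rewrite PAU pmulU /= mulr1 wmul_nil_l pconsTU. Qed.

Lemma pmul_PA_PA_pvec a U b V :
  pmul (PA (pvec (a, U))) (PA (pvec (b, V))) =
  PA (pmul (PA (pvec (a, U))) (pvec (b, V)) + pmul (pvec (a, U)) (PA (pvec (b, V))))
  + pconsT 1 (Mq a b (wmul U V)).
Proof.
rewrite !PAU !pmulU /= mulr1 mul1r mulr1 wmul_cons.
rewrite (linD PA_linear) !PA_pconsT !(linD (pconsT_linear 1)).
exact: addrC12.
Qed.

End PositiveAlgebra.

Section RqIdentities.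
Variables (K : fieldType) (A : comAlgType K).
Implicit Types (x y : FP A) (a b c : A) (u v w : seq A).

Lemma pmul_PA_PA_theta th x y :
  pmul (Wtheta th) (PA x) (PA y) =
  PA (pmul (Wtheta th) (PA x) y + pmul (Wtheta th) x (PA y))
  + th *: PA (pmul (Wtheta th) x y).
Proof.
move: x y; apply: bilin_eq; try linearity; case=> a U [b V] /=.
by rewrite pmul_PA_PA_pvec pmulU /= PA_pconsT -(linZ (pconsT_linear 1)).
Qed.

Lemma pmul_PA_PA_right x y :
  pmul Wright (PA x) (PA y) =
  PA (pmul Wright (PA x) y + pmul Wright x (PA y)) - PA (PA (pmul Wright x y)).
Proof.
move: x y; apply: bilin_eq; try linearity; case=> a U [b V] /=.
rewrite pmul_PA_PA_pvec pmulU /= PA_pconsT PA_pconsT.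
by rewrite -(linN (pconsT_linear 1)) -(linN (consT_linear 1)).
Qed.

Lemma pmul_PA_PA_left x y :
  pmul Wleft (PA x) (PA y) =
  PA (pmul Wleft (PA x) y + pmul Wleft x (PA y))
  - PA (pmul Wleft (pmul Wleft x (PA (pone A))) y).
Proof.
move: x y; apply: bilin_eq; try linearity; case=> a U [b V] /=.
rewrite pmul_PA_PA_pvec; congr (_ + _).
rewrite /pone [PA (pvec _)]PAU pmulU /= mulr1 (wmul_comm _ U [:: 1]) wmul_left_unit wmul_nil_l.
by rewrite pmul_pconsT_l tmul_left_unit tmulU PA_pconsT /= (linN (pconsT_linear 1)).
Qed.

End RqIdentities.

Section Involution.
Variables (K : fieldType) (A : comAlgType K) (dag : A -> A).
Hypothesis dag_linear : linear dag.
Hypothesis dagK : involutive dag.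
Hypothesis dag_antimul : forall a b : A, dag (a * b) = dag b * dag a.
Local Notation tdag := (tdag dag).
Local Notation pdag := (pdag dag).
Implicit Types (W : FT A) (x : FP A) (a b c : A) (u v w : seq A).

Lemma dag1 : dag 1 = 1.
Proof. by have := dag_antimul (dag 1) 1; rewrite mulr1 dagK mulr1 => <-. Qed.

Lemma dagM a b : dag (a * b) = dag a * dag b.
Proof. by rewrite dag_antimul mulrC. Qed.

Lemma tdag_consT c W : tdag (consT c W) = consT (dag c) (tdag W).
Proof.
move: W; apply: lin_eq; try linearity.
by move=> w; rewrite consTU !tdagU consTU.
Qed.

Lemma tdag_Mq q a b W : tdag (Mq q a b W) = Mq q (dag a) (dag b) (tdag W).
Proof.
case: q => [th||] /=; rewrite ?(linZ (tdag_linear _)) ?(linN (tdag_linear _)).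
all: by rewrite !tdag_consT dagM ?dag1.
Qed.

Lemma tdag_wmul q s t : tdag (wmul q s t) = wmul q (map dag s) (map dag t).
Proof.
elim: s t => [|a u IHu] t; first by rewrite wmul_nil_l tdagU.
elim: t => [|b v IHv]; first by rewrite !wmul_nil_r tdagU.
rewrite wmul_cons !(linD (tdag_linear _)) !tdag_consT tdag_Mq.
by rewrite IHu IHv IHu /= wmul_cons.
Qed.

Lemma pdag_pconsT c W : pdag (pconsT c W) = pconsT (dag c) (tdag W).
Proof.
move: W; apply: lin_eq; try linearity.
by move=> w; rewrite pconsTU pdagU tdagU pconsTU.
Qed.

Lemma pdag_pmul q x y : pdag (pmul q x y) = pmul q (pdag y) (pdag x).
Proof.
move: x y; apply: bilin_eq; try linearity; case=> a U [b V] /=.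
by rewrite pmulU pdag_pconsT !pdagU pmulU /= tdag_wmul dag_antimul wmul_comm.
Qed.

Lemma pdagK : involutive pdag.
Proof.
move=> x; move: x; apply: (lin_eq (L2 := id)); try linearity.
by case=> a w; rewrite !pdagU /= dagK (mapK dagK).
Qed.

Lemma PA_pdag x : PA (pdag x) = pdag (PA x).
Proof.
move: x; apply: lin_eq; try linearity.
by case=> a w; rewrite pdagU !PAU pdagU /= dag1.
Qed.

Lemma inv_comm_Rq_alg_positive_tensors q :
  inv_comm_Rq_alg q (@peqv K A) (pmul q) (pone A) (@PA K A) pdag.
Proof.
split.
- exact: peqv_refl.
- exact: peqv_sym.
- exact: peqv_trans.
- exact: peqv_add.
- exact: peqv_scale.
- exact: peqv_mul.
- exact: peqv_PA.
- exact: peqv_pdag.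
- by move=> k x y z; apply: eq_peqv; apply: pmul_linear_l.
- by move=> x y z; apply: eq_peqv; apply: pmulA.
- by move=> x y; apply: eq_peqv; apply: pmulC.
- by move=> x; apply: eq_peqv; apply: pmul1l.
- by move=> k x y; apply: eq_peqv; apply: PA_linear.
- case: q => [th||] x y; apply: eq_peqv.
  + exact: pmul_PA_PA_theta.
  + exact: pmul_PA_PA_right.
  + exact: pmul_PA_PA_left.
- by move=> k x y; apply: eq_peqv; apply: pdag_linear.
- by move=> x; apply: eq_peqv; apply: pdagK.
- by move=> x y; apply: eq_peqv; apply: pdag_pmul.
- by move=> x; apply: eq_peqv; apply: PA_pdag.
Qed.

End Involution.

(** * Freeness *)

Section TDAlgebra.
Variables (K : fieldType) (X : comAlgType K) (P : X -> X).
Hypothesis linP : linear P.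
Hypothesis TD : forall x y, P x * P y = P (P x * y + x * P y) - P (x * P 1 * y).

Lemma TD_mulP1 x : P x * P 1 = P (P x).
Proof. by rewrite TD !mulr1 (linD linP) addrK. Qed.

Lemma TD_mul2P1 x y : P x * P y * P 1 = P (P x * P y).
Proof.
rewrite -mulrA TD_mulP1 TD -mulrA (mulrC (P 1)) TD_mulP1.
by rewrite (linD linP) addrK.
Qed.

Lemma TD_P_mul x y : (x = 1 \/ exists z, x = P z) -> (y = 1 \/ exists z, y = P z) ->
  P (x * y) = x * y * P 1.
Proof.
case=> [->|[z ->]] [->|[z' ->]]; rewrite ?mul1r ?mulr1 //.
- by rewrite TD_mulP1.
- by rewrite TD_mulP1.
- by rewrite TD_mul2P1.
Qed.

End TDAlgebra.

Section Lifting.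
Variables (K : fieldType) (A : comAlgType K) (X : comAlgType K) (P : X -> X).
Variable phi : A -> X.
Hypothesis linP : linear P.
Hypothesis phi_linear : linear phi.
Hypothesis phiM : forall a b : A, phi (a * b) = phi a * phi b.
Hypothesis phi1 : phi 1 = 1.
Implicit Types (W : FT A) (x y : FP A) (a b c : A) (u v w : seq A).

Fixpoint ext_word (w : seq A) : X :=
  if w is b :: w' then P (phi b * ext_word w') else 1.

Definition ext_tensor : FT A -> X := lin_ext ext_word.

Definition ext_plus : FP A -> X := lin_ext (fun p => phi p.1 * ext_word p.2).

Lemma ext_tensor_linear : linear ext_tensor. Proof. exact: lin_ext_linear. Qed.
Lemma ext_plus_linear : linear ext_plus. Proof. exact: lin_ext_linear. Qed.
Lemma ext_tensorU w : ext_tensor (wvec w) = ext_word w. Proof. exact: lin_extU. Qed.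
Lemma ext_plusU a w : ext_plus (pvec (a, w)) = phi a * ext_word w. Proof. exact: lin_extU. Qed.

Local Hint Extern 1 (linear (fun z => ext_tensor z)) => exact: ext_tensor_linear : linear_maps.
Local Hint Extern 1 (linear (fun z => ext_plus z)) => exact: ext_plus_linear : linear_maps.
Local Hint Extern 1 (linear (fun z => P z)) => exact: linP : linear_maps.

Lemma ext_tensor_consT c W : ext_tensor (consT c W) = P (phi c * ext_tensor W).
Proof.
move: W; apply: lin_eq; try linearity.
by move=> w; rewrite consTU !ext_tensorU.
Qed.

Lemma ext_plus_pconsT c W : ext_plus (pconsT c W) = phi c * ext_tensor W.
Proof.
move: W; apply: lin_eq; try linearity.
by move=> w; rewrite pconsTU ext_plusU ext_tensorU.
Qed.

Lemma ext_tensor_Mq q a b W : ext_tensor (Mq q a b W) =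
  match q with
  | Wtheta th => th *: P (phi (a * b) * ext_tensor W)
  | Wright => - P (P (phi (a * b) * ext_tensor W))
  | Wleft => - P (phi (a * b) * P (ext_tensor W))
  end.
Proof.
case: q => [th||] /=; rewrite ?(linZ ext_tensor_linear) ?(linN ext_tensor_linear).
all: by rewrite !ext_tensor_consT ?phi1 ?mul1r.
Qed.

Lemma ext_word_1VP w : ext_word w = 1 \/ exists z, ext_word w = P z.
Proof. by case: w => [|b w]; [left | right; exists (phi b * ext_word w)]. Qed.

Lemma ext_tensor_wmul q : Rq_identity q eq *%R 1 P ->
  forall s t, ext_tensor (wmul q s t) = ext_word s * ext_word t.
Proof.
move=> PRq; elim=> [|a u IHu] t; first by rewrite wmul_nil_l ext_tensorU mul1r.
elim: t => [|b v IHv]; first by rewrite wmul_nil_r ext_tensorU mulr1.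
rewrite wmul_cons !(linD ext_tensor_linear) !ext_tensor_consT ext_tensor_Mq !IHu IHv /=.
set x := phi a * ext_word u; set y := phi b * ext_word v.
rewrite mulrA -/x mulrCA -/y.
clear IHu IHv; case: q PRq => [th||] PRq /=; rewrite PRq (linD linP) (addrC (P (P x * y))).
- by rewrite phiM mulrACA.
- by rewrite phiM mulrACA.
(* TD case: words take values in 1 or im P, where P (x * y) = x * y * P 1. *)
rewrite (TD_P_mul linP PRq (ext_word_1VP u) (ext_word_1VP v)) phiM.
by rewrite [_ * (_ * _ * P 1)](_ : _ = x * P 1 * y) // /x /y; ring.
Qed.

Lemma ext_plus_pmul q : Rq_identity q eq *%R 1 P ->
  forall x y, ext_plus (pmul q x y) = ext_plus x * ext_plus y.
Proof.
move=> PRq; apply: bilin_eq; try linearity; case=> a U [b V] /=.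
by rewrite pmulU ext_plus_pconsT (ext_tensor_wmul PRq) !ext_plusU phiM mulrACA.
Qed.

Lemma ext_plus1 : ext_plus (pone A) = 1.
Proof. by rewrite ext_plusU phi1 mulr1. Qed.

Lemma ext_plus_PA x : ext_plus (PA x) = P (ext_plus x).
Proof.
move: x; apply: lin_eq; try linearity.
by case=> a w; rewrite PAU !ext_plusU phi1 mul1r.
Qed.

Lemma ext_plus_iA a : ext_plus (iA a) = phi a.
Proof. by rewrite ext_plusU mulr1. Qed.

Definition ext_flat_word (w : seq A) : X :=
  if w is a :: w' then phi a * ext_word w' else 0.

Lemma ext_word_multilinear u v (k : K) a b :
  ext_word (u ++ (k *: a + b) :: v) = k *: ext_word (u ++ a :: v) + ext_word (u ++ b :: v).
Proof.
elim: u => [|e u IH] /=.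
- by rewrite phi_linear mulrDl -scalerAl linP.
- by rewrite IH mulrDr -scalerAr linP.
Qed.

Lemma ext_flat_word_multilinear u v (k : K) a b :
  ext_flat_word (u ++ (k *: a + b) :: v) =
  k *: ext_flat_word (u ++ a :: v) + ext_flat_word (u ++ b :: v).
Proof.
case: u => [|e u] /=.
- by rewrite phi_linear mulrDl -scalerAl.
- by rewrite ext_word_multilinear mulrDr -scalerAr.
Qed.

Lemma ext_flat_tnull z : tnull z -> lin_ext ext_flat_word z = 0.
Proof.
have linL := lin_ext_linear ext_flat_word.
elim=> [u v a b k|y z' _ hy _ hz|k y _ hy].
- rewrite !(linB linL) (linZ linL) !lin_extU ext_flat_word_multilinear.
  by rewrite addrAC addrK subrr.
- by rewrite (linD linL) hy hz addr0.
- by rewrite (linZ linL) hy scaler0.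
Qed.

Lemma ext_plus_flat x : ext_plus x = lin_ext ext_flat_word (flat x).
Proof.
move: x; apply: lin_eq; first exact: ext_plus_linear.
  exact: linear_compf (lin_ext_linear _) flat_linear.
by case=> a w; rewrite flatU ext_plusU lin_extU.
Qed.

Lemma ext_plus_peqv x y : peqv x y -> ext_plus x = ext_plus y.
Proof.
rewrite /peqv /teqv => /ext_flat_tnull.
by rewrite (linB (lin_ext_linear _)) -!ext_plus_flat => /eqP; rewrite subr_eq0 => /eqP.
Qed.

Lemma Rq_morph_ext_plus_unique q (f : FP A -> X) :
  Rq_morph (@peqv K A) (pmul q) (pone A) (@PA K A) P f ->
  (forall a, f (iA a) = phi a) -> forall x, f x = ext_plus x.
Proof.
move=> Mf fi; apply: lin_eq; [exact: morph_linear Mf | exact: ext_plus_linear |].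
case=> a w; elim: w a => [|b w IH] a.
  by change (f (iA a) = ext_plus (iA a)); rewrite fi ext_plus_iA.
change (f (pvec (a, b :: w)) = ext_plus (pvec (a, b :: w))).
by rewrite [in f _](pvec_cons q) (morph_mul Mf) (morph_P Mf) fi IH !ext_plusU.
Qed.

Variables (dag : A -> A) (dag' : X -> X).
Hypothesis dag'_linear : linear dag'.
Hypothesis dag'K : involutive dag'.
Hypothesis dag'_antimul : forall x y : X, dag' (x * y) = dag' y * dag' x.
Hypothesis P_dag' : forall z : X, P (dag' z) = dag' (P z).
Hypothesis phi_dag : forall a, phi (dag a) = dag' (phi a).

Lemma ext_word_dag w : ext_word (map dag w) = dag' (ext_word w).
Proof.
elim: w => [|b w IH] /=; first by rewrite (dag1 dag'K dag'_antimul).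
by rewrite IH phi_dag -dag'_antimul mulrC P_dag'.
Qed.

Lemma ext_plus_pdag U : ext_plus (pdag dag U) = dag' (ext_plus U).
Proof.
move: U; apply: lin_eq; try linearity.
by case=> a w; rewrite pdagU !ext_plusU phi_dag ext_word_dag -dag'_antimul mulrC.
Qed.

End Lifting.

Theorem theorem4p9 (K : fieldType) (charK0 : [pchar K] =i pred0)
  (A : comAlgType K) (dag : A -> A)
  (dag_lin : forall (k : K) (a b : A), dag (k *: a + b) = k *: dag a + dag b)
  (dag_invol : forall a : A, dag (dag a) = a)
  (dag_antimul : forall a b : A, dag (a * b) = dag b * dag a)
  (q : wtype K) :
  inv_comm_Rq_alg q (@peqv K A) (pmul q) (pone A) (@PA K A) (pdag dag)
  /\
  forall (X : comAlgType K) (P dag' : X -> X),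
    inv_comm_Rq_alg q (@eq X) *%R 1 P dag' ->
    forall phi : A -> X,
      (forall (k : K) (a b : A), phi (k *: a + b) = k *: phi a + phi b) ->
      (forall a b : A, phi (a * b) = phi a * phi b) ->
      phi 1 = 1 ->
      (forall a : A, phi (dag a) = dag' (phi a)) ->
      (exists psi : FP A -> X,
          Rq_morph (@peqv K A) (pmul q) (pone A) (@PA K A) P psi
          /\ (forall a : A, psi (iA a) = phi a)
          /\ (forall U : FP A, psi (pdag dag U) = dag' (psi U)))
      /\
      (forall psi1 psi2 : FP A -> X,
          Rq_morph (@peqv K A) (pmul q) (pone A) (@PA K A) P psi1 ->
          (forall a : A, psi1 (iA a) = phi a) ->
          Rq_morph (@peqv K A) (pmul q) (pone A) (@PA K A) P psi2 ->
          (forall a : A, psi2 (iA a) = phi a) ->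
          forall U : FP A, psi1 U = psi2 U).
Proof.
split; first exact: inv_comm_Rq_alg_positive_tensors.
move=> X P dag' HX phi phi_lin phiM phi1 phi_dag.
have linP : linear P := P_linear HX.
split.
- exists (ext_plus P phi); split; [split|split].
  + exact: ext_plus_peqv.
  + exact: ext_plus_linear.
  + exact: ext_plus_pmul (P_Rq HX).
  + exact: ext_plus1.
  + exact: ext_plus_PA.
  + exact: ext_plus_iA.
  + exact: ext_plus_pdag (dag_linear HX) (Defs.dag_invol HX) (Defs.dag_antimul HX)
      (dag_P HX) phi_dag.
- move=> psi1 psi2 M1 h1 M2 h2 U.
  by rewrite (Rq_morph_ext_plus_unique M1 h1) (Rq_morph_ext_plus_unique M2 h2).
Qed.
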